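(* Let $\tilde d_2$ be a metric on $\mathbb R^2$ for which there exist continuous functions $g_1,g_2:[0,\infty)\to[0,\infty)$ with $g_1(1)=g_2(1)=1$ such that $\tilde d_2(x,y)=g_1(|x-y|)$ whenever $x_1=y_1$, and $\tilde d_2(x,y)=g_2(|x-y|)$ whenever $x_2=y_2=0$ (where $x=(x_1,x_2)$, $y=(y_1,y_2)$). Then the following are equivalent: (i) $\tilde d_2=d_2$; (ii) $\mathcal C_{\tilde d_2}(P_1,P_2)=\mathcal C_{d_2}(P_1,P_2)$ for all $P_1,P_2\in\mathbb R^2$.
   Context: $|\cdot|$ is the Euclidean norm. The river metric on $\mathbb R^2$ is $d_2(A,B)=|A_2-B_2|$ if $A_1=B_1$, and $d_2(A,B)=|A_2|+|A_1-B_1|+|B_2|$ if $A_1\neq B_1$, for $A=(A_1,A_2)$, $B=(B_1,B_2)$. For a metric $d$ on a set $M$ and $A,B\in M$, $\mathcal C_d(A,B)=\{X\in M:\ d(X,A)=d(X,B)+d(A,B)<+\infty\}$. *)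

From Stdlib Require Import Reals.
Open Scope R_scope.

Definition pt := (R * R)%type.

Definition eucl (A B : pt) : R :=
  sqrt ((fst A - fst B) ^ 2 + (snd A - snd B) ^ 2).

Definition river (A B : pt) : R :=
  if Req_EM_T (fst A) (fst B) then Rabs (snd A - snd B)
  else Rabs (snd A) + Rabs (fst A - fst B) + Rabs (snd B).

Definition is_metric (d : pt -> pt -> R) : Prop :=
  (forall x y, 0 <= d x y) /\
  (forall x y, d x y = 0 <-> x = y) /\
  (forall x y, d x y = d y x) /\
  (forall x y z, d x z <= d x y + d y z).

(* C_d(A,B) = { X | d(X,A) = d(X,B) + d(A,B) < +oo }; finiteness is
   automatic since d is real-valued. *)
Definition Cset (d : pt -> pt -> R) (A B : pt) : pt -> Prop :=
  fun X => d X A = d X B + d A B.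

Definition nonneg_cont_on_halfline (g : R -> R) : Prop :=
  (forall t, 0 <= t -> 0 <= g t) /\
  (forall t, 0 <= t -> limit1_in g (fun s => 0 <= s) (g t) t).

(** If the [C]-sets of [dt] contain those of the river metric, then three
    points in river-order on a vertical line, or on the horizontal axis, are
    in [dt]-order as well.  Hence the profiles [g1], [g2] are additive on
    [[0,oo)]; being nonnegative with [g 1 = 1] they are the identity (no
    continuity is needed), so [dt] is Euclidean on vertical lines and on the
    axis.  A general pair with [x1 <> y1] is joined in river-order through the
    feet [(x1,0)], [(y1,0)], which splits [dt x y] into three such distances. *)

From Stdlib Require Import Reals Lra Lia ZArith.
Open Scope R_scope.

Section AdditiveOnHalfline.

Variable g : R -> R.
Hypothesis g_ge0 : forall t, 0 <= t -> 0 <= g t.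
Hypothesis gD : forall u v, 0 <= u -> 0 <= v -> g (u + v) = g u + g v.
Hypothesis g_1 : g 1 = 1.

Lemma additive_halfline_0 : g 0 = 0.
Proof.
  assert (H := gD 0 0 (Rle_refl 0) (Rle_refl 0)).
  rewrite Rplus_0_r in H; lra.
Qed.

Lemma additive_halfline_natmul (n : nat) (x : R) :
  0 <= x -> g (INR n * x) = INR n * g x.
Proof.
  intros Hx; induction n as [|n IH].
  - simpl; rewrite !Rmult_0_l; exact additive_halfline_0.
  - rewrite S_INR; replace ((INR n + 1) * x) with (INR n * x + x) by ring.
    rewrite gD, IH by (try apply Rmult_le_pos; auto using pos_INR).
    ring.
Qed.

(* Write [x = n + f] with [0 <= f < 1]; then [g x = n + g f] and
   [0 <= g f <= g f + g (1 - f) = 1]. *)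
Lemma additive_halfline_near_id (x : R) : 0 <= x -> -1 <= g x - x <= 1.
Proof.
  intros Hx.
  destruct (archimed x) as [Hup1 Hup2].
  assert (Hup0 : (0 < up x)%Z) by (apply lt_0_IZR; lra).
  set (n := Z.to_nat (up x - 1)).
  assert (Hn : INR n = IZR (up x) - 1).
  { unfold n; rewrite INR_IZR_INZ, Z2Nat.id, minus_IZR by lia; reflexivity. }
  set (f := x - INR n).
  assert (Hgx : g x = INR n + g f).
  { replace x with (INR n * 1 + f) at 1 by (unfold f; ring).
    rewrite gD, additive_halfline_natmul, g_1 by
      (try apply Rmult_le_pos; unfold f; auto using pos_INR; lra).
    ring. }
  assert (Hg1 : g f + g (1 - f) = 1).
  { rewrite <- gD by (unfold f; lra).
    replace (f + (1 - f)) with 1 by ring; exact g_1. }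
  assert (0 <= g f) by (apply g_ge0; unfold f; lra).
  assert (0 <= g (1 - f)) by (apply g_ge0; unfold f; lra).
  unfold f in *; lra.
Qed.

(* [|g s - s| = |g (N s) - N s| / N <= 1 / N] for every [N]. *)
Lemma additive_halfline_id (s : R) : 0 <= s -> g s = s.
Proof.
  intros Hs.
  destruct (Req_dec (g s - s) 0) as [E|E]; [lra|].
  destruct (archimed_cor1 _ (Rabs_pos_lt _ E)) as [N [HN HN0]].
  assert (HNpos : 0 < INR N) by (apply lt_0_INR; lia).
  assert (HB := additive_halfline_near_id (INR N * s)
                  ltac:(apply Rmult_le_pos; lra)).
  rewrite additive_halfline_natmul in HB by lra.
  assert (INR N * Rabs (g s - s) <= 1).
  { rewrite <- (Rabs_pos_eq (INR N)), <- Rabs_mult by lra.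
    apply Rabs_le; lra. }
  assert (Rabs (g s - s) <= / INR N).
  { apply (Rmult_le_reg_l (INR N)); [lra|]; rewrite Rinv_r; lra. }
  lra.
Qed.

End AdditiveOnHalfline.

Lemma eucl_vertical (x y : pt) :
  fst x = fst y -> eucl x y = Rabs (snd x - snd y).
Proof.
  intros H; unfold eucl; rewrite H, Rminus_diag.
  replace (0 ^ 2 + (snd x - snd y) ^ 2) with (Rsqr (snd x - snd y))
    by (unfold Rsqr; ring).
  apply sqrt_Rsqr_abs.
Qed.

Lemma eucl_horizontal (x y : pt) :
  snd x = 0 -> snd y = 0 -> eucl x y = Rabs (fst x - fst y).
Proof.
  intros H1 H2; unfold eucl; rewrite H1, H2, Rminus_diag.
  replace ((fst x - fst y) ^ 2 + 0 ^ 2) with (Rsqr (fst x - fst y))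
    by (unfold Rsqr; ring).
  apply sqrt_Rsqr_abs.
Qed.

Lemma river_vertical (x y : pt) :
  fst x = fst y -> river x y = Rabs (snd x - snd y).
Proof.
  intros H; unfold river.
  destruct (Req_EM_T (fst x) (fst y)); [reflexivity | contradiction].
Qed.

Lemma river_horizontal (x y : pt) :
  snd x = 0 -> snd y = 0 -> river x y = Rabs (fst x - fst y).
Proof.
  intros H1 H2; unfold river; rewrite H1, H2.
  destruct (Req_EM_T (fst x) (fst y)) as [e|e].
  - rewrite e, !Rminus_diag; reflexivity.
  - rewrite Rabs_R0; ring.
Qed.

Lemma river_offaxis (x y : pt) :
  fst x <> fst y -> river x y = Rabs (snd x) + Rabs (fst x - fst y) + Rabs (snd y).
Proof.
  intros H; unfold river.
  destruct (Req_EM_T (fst x) (fst y)); [contradiction | reflexivity].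
Qed.

Lemma Cset_river_vertical (u v : R) :
  0 <= u -> 0 <= v -> Cset river (0, 0) (0, v) (0, u + v).
Proof.
  intros Hu Hv; unfold Cset; rewrite !river_vertical by reflexivity; simpl.
  replace (u + v - v) with u by ring; replace (0 - v) with (- v) by ring.
  rewrite Rabs_Ropp, !Rminus_0_r, !Rabs_pos_eq by lra; ring.
Qed.

Lemma Cset_river_horizontal (u v : R) :
  0 <= u -> 0 <= v -> Cset river (0, 0) (v, 0) (u + v, 0).
Proof.
  intros Hu Hv; unfold Cset; rewrite !river_horizontal by reflexivity; simpl.
  replace (u + v - v) with u by ring; replace (0 - v) with (- v) by ring.
  rewrite Rabs_Ropp, !Rminus_0_r, !Rabs_pos_eq by lra; ring.
Qed.

Lemma Cset_river_foot_left (x1 x2 y1 y2 : R) :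
  x1 <> y1 -> Cset river (y1, y2) (x1, 0) (x1, x2).
Proof.
  intros H; unfold Cset.
  rewrite (river_vertical (x1, x2) (x1, 0)), !river_offaxis by (simpl; auto using not_eq_sym).
  simpl; rewrite Rminus_0_r, Rabs_R0, (Rabs_minus_sym y1 x1); ring.
Qed.

Lemma Cset_river_foot_right (x1 y1 y2 : R) :
  x1 <> y1 -> Cset river (y1, y2) (y1, 0) (x1, 0).
Proof.
  intros H; unfold Cset.
  rewrite (river_vertical (y1, y2) (y1, 0)), (river_horizontal (x1, 0) (y1, 0)), river_offaxis
    by (simpl; auto using not_eq_sym).
  simpl; rewrite Rminus_0_r, Rabs_R0; ring.
Qed.

Section RiverOrdered.

Variable d : pt -> pt -> R.
Hypothesis d_sym : forall x y, d x y = d y x.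
Hypothesis Cset_river_sub : forall P1 P2 X, Cset river P1 P2 X -> Cset d P1 P2 X.

Lemma vertical_profile_additive (g : R -> R) :
  (forall x y : pt, fst x = fst y -> d x y = g (eucl x y)) ->
  forall u v, 0 <= u -> 0 <= v -> g (u + v) = g u + g v.
Proof.
  intros Hg u v Hu Hv.
  assert (E := Cset_river_sub _ _ _ (Cset_river_vertical u v Hu Hv)).
  unfold Cset in E; rewrite !Hg, !eucl_vertical in E by reflexivity; simpl in E.
  replace (u + v - v) with u in E by ring; replace (0 - v) with (- v) in E by ring.
  rewrite Rabs_Ropp, !Rminus_0_r, !Rabs_pos_eq in E by lra; exact E.
Qed.

Lemma horizontal_profile_additive (g : R -> R) :
  (forall x y : pt, snd x = 0 -> snd y = 0 -> d x y = g (eucl x y)) ->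
  forall u v, 0 <= u -> 0 <= v -> g (u + v) = g u + g v.
Proof.
  intros Hg u v Hu Hv.
  assert (E := Cset_river_sub _ _ _ (Cset_river_horizontal u v Hu Hv)).
  unfold Cset in E; rewrite !Hg, !eucl_horizontal in E by reflexivity; simpl in E.
  replace (u + v - v) with u in E by ring; replace (0 - v) with (- v) in E by ring.
  rewrite Rabs_Ropp, !Rminus_0_r, !Rabs_pos_eq in E by lra; exact E.
Qed.

Lemma split_through_feet (x1 x2 y1 y2 : R) :
  x1 <> y1 ->
  d (x1, x2) (y1, y2) = d (x1, x2) (x1, 0) + d (x1, 0) (y1, 0) + d (y1, 0) (y1, y2).
Proof.
  intros H.
  assert (E1 := Cset_river_sub _ _ _ (Cset_river_foot_left x1 x2 y1 y2 H)).
  assert (E2 := Cset_river_sub _ _ _ (Cset_river_foot_right x1 y1 y2 H)).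
  unfold Cset in E1, E2.
  rewrite E1, (d_sym (y1, y2) (x1, 0)), E2, (d_sym (y1, y2) (y1, 0)); ring.
Qed.

Lemma eq_river_of_lines :
  (forall x y : pt, fst x = fst y -> d x y = river x y) ->
  (forall x y : pt, snd x = 0 -> snd y = 0 -> d x y = river x y) ->
  forall x y, d x y = river x y.
Proof.
  intros Dv Dh [x1 x2] [y1 y2].
  destruct (Req_dec x1 y1) as [e|ne]; [apply Dv; exact e|].
  rewrite split_through_feet by exact ne.
  rewrite (Dv (x1, x2)), (Dv (y1, 0)), Dh by reflexivity.
  rewrite (river_vertical (x1, x2)), (river_vertical (y1, 0)), river_horizontal
    by reflexivity.
  rewrite river_offaxis by exact ne; simpl.
  rewrite !Rminus_0_r, !Rminus_0_l, Rabs_Ropp; ring.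
Qed.

End RiverOrdered.

Theorem theorem3p5 (dt : pt -> pt -> R) :
  is_metric dt ->
  (exists g1 g2 : R -> R,
      nonneg_cont_on_halfline g1 /\ nonneg_cont_on_halfline g2 /\
      g1 1 = 1 /\ g2 1 = 1 /\
      (forall x y : pt, fst x = fst y -> dt x y = g1 (eucl x y)) /\
      (forall x y : pt, snd x = 0 -> snd y = 0 -> dt x y = g2 (eucl x y))) ->
  ((forall x y : pt, dt x y = river x y) <->
   (forall P1 P2 X : pt, Cset dt P1 P2 X <-> Cset river P1 P2 X)).
Proof.
  intros [_ [_ [dt_sym _]]]
         [g1 [g2 [[g1_ge0 _] [[g2_ge0 _] [g1_1 [g2_1 [Hv Hh]]]]]]].
  split.
  - intros Hd P1 P2 X; unfold Cset; rewrite !Hd; tauto.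
  - intros HC.
    assert (Hsub : forall P1 P2 X, Cset river P1 P2 X -> Cset dt P1 P2 X)
      by (intros; apply HC; assumption).
    assert (G1 := additive_halfline_id g1 g1_ge0
                    (vertical_profile_additive dt Hsub g1 Hv) g1_1).
    assert (G2 := additive_halfline_id g2 g2_ge0
                    (horizontal_profile_additive dt Hsub g2 Hh) g2_1).
    apply (eq_river_of_lines dt dt_sym Hsub).
    + intros x y E.
      rewrite Hv, eucl_vertical, G1, river_vertical by (auto using Rabs_pos).
      reflexivity.
    + intros x y E1 E2.
      rewrite Hh, eucl_horizontal, G2, river_horizontal by (auto using Rabs_pos).
      reflexivity.
Qed.
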